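(* Let $n,m\ge 1$ and identify $n$-bit strings with elements of the finite field $\mathbb{F}_{2^n}$, with addition $\oplus$ (bitwise XOR) and field multiplication $*$; for a bit $d$ and $b\in\mathbb{F}_{2^n}$ let $d\cdot b$ be $0$ if $d=0$ and $b$ if $d=1$. Let $B_1,\dots,B_m$ be independent uniformly random elements of $\mathbb{F}_{2^n}$ (honest Bob's challenges), and let $R_A$ be a random variable on a finite set, independent of $(B_1,\dots,B_m)$ (Alice's preshared randomness). A classical cheating strategy of Alice is a collection of deterministic functions with values in $\mathbb{F}_{2^n}$ giving her messages $Y_1=f_1(R_A,B_1)$; for $2\le k\le m$, $Y_k^{(d)}=f_k(R_A,B_1,\dots,B_{k-2},B_k,d)$; and $Y_{m+1}^{(d)}=f_{m+1}(R_A,B_1,\dots,B_{m-1},d)$, where $d\in\{0,1\}$ is the bit she attempts to unveil. Let $H_d$ be the event $$Y^{(d)}_{m+1}=\bigoplus_{j=1}^{m}\Big(\prod_{i=j+1}^{m}B_i\Big)*Y^{(d)}_j\ \oplus\ d\cdot\prod_{i=1}^{m}B_i,$$ where $Y^{(d)}_1:=Y_1$, products are taken with $*$ and the empty product equals $1$, and let $p_d=\Pr[H_d]$. Define $c_1=2^{-n}$ and $c_m=2^{-(n+1)}+\sqrt{c_{m-1}}$ for $m\ge2$. Then for every such strategy, $p_0+p_1\le 1+c_m$; i.e. the $(m+1)$-round protocol is $\varepsilon$-binding against classical adversaries with $\varepsilon=c_m$.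
   Context: The multi-round protocol: Alice's agents share independent uniform secrets $a_1,\dots,a_m\in\mathbb{F}_{2^n}$ and Bob's agents independent uniform $b_1,\dots,b_m$. Rounds alternate between two distant locations and consecutive rounds are space-like separated. Round 1 (commit): Bob sends $x_1=b_1$, Alice returns $y_1=d\cdot x_1\oplus a_1$. Rounds $2\le k\le m$ (sustain): Bob sends $x_k=b_k$, Alice returns $y_k=(x_k*a_{k-1})\oplus a_k$. Round $m+1$ (open): Alice sends $d$ and $y_{m+1}=a_m$. Bob accepts iff $y_{m+1}=y_m\oplus b_m*y_{m-1}\oplus b_m*b_{m-1}*y_{m-2}\oplus\dots\oplus b_m*\cdots*b_2*y_1\oplus d\cdot b_m*\cdots*b_1$. The causal constraints imply that Alice's message in round $k$ cannot depend on Bob's message in round $k-1$, and her commit-phase message cannot depend on $d$; this is what the dependencies of the functions $f_k$ in the claim encode. A protocol is $\varepsilon$-binding if $p_0+p_1\le1+\varepsilon$ for all cheating strategies. *)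

From HB Require Import structures.
From mathcomp Require Import all_boot all_order all_algebra all_field.
From mathcomp Require Import reals.
Set Implicit Arguments. Unset Strict Implicit. Unset Printing Implicit Defensive.
Import Order.TTheory GRing.Theory Num.Theory.
Local Open Scope ring_scope.

(* Rounds are indexed 0..m (0-indexed) : index j : 'I_m.+1 is round j+1.
   Bob's challenges b : {ffun 'I_m -> F}, b i = B_{i+1}.
   f j a b d is Alice's message in round j+1 (the d argument is ignored in
   round 1, which is enforced by a hypothesis of the theorem). *)

(* Causal constraint: the message of round j+1 may only depend on
   B_{i+1} with i+1 < j (i.e. B_1..B_{j-1}) or i = j (i.e. B_{j+1}). *)
Definition allowed (m : nat) (j : 'I_m.+1) (i : 'I_m) : bool :=
  (i.+1 < j)%N || (i == j :> nat).

Definition accepts (F : finFieldType) (A : finType) (m : nat)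
  (f : 'I_m.+1 -> A -> {ffun 'I_m -> F} -> bool -> F)
  (a : A) (b : {ffun 'I_m -> F}) (d : bool) : bool :=
  f ord_max a b d ==
    \sum_(j < m) (\prod_(i < m | (j < i)%N) b i) * f (widen_ord (leqnSn m) j) a b d
    + (if d then \prod_(i < m) b i else 0).

Definition prob_accept (R : realType) (F : finFieldType) (A : finType) (m : nat)
  (mu : A -> R) (f : 'I_m.+1 -> A -> {ffun 'I_m -> F} -> bool -> F) (d : bool) : R :=
  \sum_(a : A) mu a *
     ((#|[set b : {ffun 'I_m -> F} | accepts f a b d]|)%:R
       / (#|{ffun 'I_m -> F}|)%:R).

(* c_1 = 2^-n, c_m = 2^-(n+1) + sqrt c_{m-1}; c 0 is set to c 1 (unused). *)
Fixpoint cbound (R : realType) (n m : nat) : R :=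
  match m with
  | 0%N | 1%N => ((2 : R) ^+ n)^-1
  | k.+1 => ((2 : R) ^+ n.+1)^-1 + Num.sqrt (cbound R n k)
  end.

From HB Require Import structures.
From mathcomp Require Import all_boot all_order all_algebra all_field.
From mathcomp Require Import reals ring lra zify.
Import Order.TTheory GRing.Theory Num.Theory.
Local Open Scope ring_scope.

(** Write D_k for the difference of Alice's two possible answers in round k
  (so D_1 = 0) and T_0 = -1, T_k = B_k T_(k-1) + D_k.  Bob accepts both openings
  only if D_(m+1) = T_m, so by inclusion-exclusion p_0 + p_1 <= 1 + Pr[D_(m+1) = T_m],
  and D_(m+1) does not depend on B_m.  We show Pr[T_k = h] <= c_k, by induction on
  k, for every h not depending on B_k, ..., B_m.  Fixing all challenges but
  (u, v) = (B_k, B_(k+1)), the event T_(k+1) = h becomes P u = v G u + H v with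
  G u = T_k, because causality makes D_(k+1) independent of B_k.  Cauchy-Schwarz
  over v bounds the number of such pairs by q/2 + q sqrt(#collisions of G); the
  collisions of u |-> T_k are counted by the induction hypothesis and summed over
  the other challenges with Cauchy-Schwarz once more. *)

Lemma sqr_sum_le {R : realFieldType} {I : finType} (a : I -> R) :
  (\sum_i a i) ^+ 2 <= #|I|%:R * \sum_i a i ^+ 2.
Proof.
have le_mul (x y : R) : x * y <= (x ^+ 2 + y ^+ 2) / 2.
  by have := sqr_ge0 (x - y); rewrite sqrrB; lra.
rewrite expr2 mulr_suml.
apply: le_trans (_ : \sum_i \sum_j (a i ^+ 2 + a j ^+ 2) / 2 <= _).
  by apply: ler_sum => i _; rewrite mulr_sumr; apply: ler_sum => j _; apply: le_mul.
under eq_bigr => i _ do rewrite -mulr_suml big_split /= sumr_const.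
rewrite -mulr_suml big_split /= sumrMnl sumr_const.
by rewrite (_ : #|xpredT| = #|I|) // -mulr_natl; lra.
Qed.

Lemma sum_sqrt_le {R : rcfType} {I : finType} (x : I -> R) : (forall i, 0 <= x i) ->
  \sum_i Num.sqrt (x i) <= Num.sqrt (#|I|%:R * \sum_i x i).
Proof.
move=> x_ge0.
have sum_ge0 : 0 <= \sum_i Num.sqrt (x i) by apply: sumr_ge0 => i _; apply: sqrtr_ge0.
rewrite -(ger0_norm sum_ge0) -sqrtr_sqr; apply: ler_wsqrtr.
apply: le_trans (sqr_sum_le (fun i => Num.sqrt (x i))) _.
by under eq_bigr => i _ do rewrite sqr_sqrtr //.
Qed.

Lemma le_half_add_sqrt (R : rcfType) (q N C : R) :
  0 < q -> q <= C -> N ^+ 2 <= q * (N + (q - 1) * C) ->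
  N <= q / 2 + q * Num.sqrt C.
Proof.
move=> q_gt0 le_qC le_N2.
have := sqr_sqrtr (le_trans (ltW q_gt0) le_qC); have := sqrtr_ge0 C.
set s := Num.sqrt C => s_ge0 s2; rewrite -s2 in le_qC le_N2.
have le_qq : q * q <= q * s ^+ 2 by rewrite ler_pM2l.
have qq_ge0 : 0 <= q * q by rewrite mulr_ge0 ?ltW.
have qs_ge0 := mulr_ge0 (ltW q_gt0) s_ge0.
have sqr_le : (N - q / 2) ^+ 2 <= (q * s) ^+ 2.
  have -> : (N - q / 2) ^+ 2 = N ^+ 2 - q * N + q * q / 4 by field.
  rewrite exprMn; nra.
have : `|N - q / 2| <= q * s.
  by rewrite -(ler_pXn2r (isT : (0 < 2)%N)) ?nnegrE ?normr_ge0 // real_normK ?num_real.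
have := ler_norm (N - q / 2); lra.
Qed.

Lemma natr_card_gt0 {R : numDomainType} {T : finType} (x : T) : 0 < (#|T|%:R : R).
Proof. by rewrite ltr0n; apply/card_gt0P; exists x. Qed.

Section LineCount.
Context {R : rcfType} {F : finFieldType}.

Definition collisions (g : F -> F) : R := \sum_u \sum_u' (g u == g u')%:R.

Lemma card_le_collisions g : #|F|%:R <= collisions g.
Proof.
rewrite -sum1_card natr_sum; apply: ler_sum => u _.
by rewrite (bigD1 u) //= eqxx lerDl sumr_ge0.
Qed.

Variables P G H : F -> F.
Local Notation q := (#|F|%:R : R).
Local Notation incidence u v := (((P u == v * G u + H v)%R)%:R : R).

Lemma sum_incidence_pair_le u u' : u != u' ->
  \sum_v incidence u v * incidence u' v <= 1 + (q - 1) * (G u == G u')%:R.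
Proof.
move=> neq_uu'; have [eqG|neqG] := eqVneq (G u) (G u').
  rewrite mulr1 addrC subrK -sum1_card natr_sum; apply: ler_sum => v _.
  by case: eqP; case: eqP; rewrite ?mulr0 ?mulr1.
(* subtracting the two incidence equations leaves v * (G u - G u') = P u - P u' *)
rewrite mulr0n mulr0 addr0; set v0 := (P u - P u') / (G u - G u').
rewrite (bigD1 v0) //= big1 ?addr0 => [|v neq_v].
  by case: eqP; case: eqP; rewrite ?mulr0 ?mulr1.
have [Pu|] := eqVneq (P u) (v * G u + H v); last by rewrite mul0r.
have [Pu'|] := eqVneq (P u') (v * G u' + H v); last by rewrite mulr0.
suff : v0 == v by rewrite eq_sym (negbTE neq_v).
have nz : G u - G u' != 0 by rewrite subr_eq0.
by rewrite /v0 Pu Pu' (_ : _ - _ = v * (G u - G u')) ?mulfK //; ring.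
Qed.

Lemma sum_incidence_row_le u :
  \sum_u' \sum_v incidence u v * incidence u' v <=
  \sum_v incidence u v + (q - 1) * \sum_u' (G u == G u')%:R.
Proof.
have diag : \sum_v incidence u v * incidence u v = \sum_v incidence u v.
  by apply: eq_bigr => v _; case: eqP; rewrite ?mulr0 ?mulr1.
have card_off : \sum_(u' | u' != u) (1 : R) = q - 1.
  by rewrite sumr_const cardC1 -subn1 natrB ?card_gt0 //; apply/card_gt0P; exists 0.
have off : \sum_(u' | u' != u) \sum_v incidence u v * incidence u' v <=
           (q - 1) + (q - 1) * \sum_(u' | u' != u) (G u == G u')%:R.
  apply: le_trans (_ : \sum_(u' | u' != u) (1 + (q - 1) * (G u == G u')%:R) <= _).
    by apply: ler_sum => u' neq; apply: sum_incidence_pair_le; rewrite eq_sym.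
  by rewrite big_split /= card_off mulr_sumr.
rewrite (bigD1 u) //= [X in _ <= _ + _ * X](bigD1 u) //= eqxx mulr1n diag; lra.
Qed.

Lemma sqr_incidences_le :
  (\sum_u \sum_v incidence u v) ^+ 2 <=
  q * (\sum_u \sum_v incidence u v + (q - 1) * collisions G).
Proof.
apply: (@le_trans _ _ (q * \sum_v (\sum_u incidence u v) ^+ 2)).
  by rewrite exchange_big; apply: sqr_sum_le.
rewrite ler_pM2l ?(natr_card_gt0 (0 : F)) //.
have -> : \sum_v (\sum_u incidence u v) ^+ 2 =
          \sum_u \sum_u' \sum_v incidence u v * incidence u' v.
  under eq_bigr => v _ do rewrite expr2 mulr_suml; rewrite exchange_big /=.
  by apply: eq_bigr => u _; rewrite -exchange_big /=; apply: eq_bigr => v _; rewrite mulr_sumr.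
apply: (@le_trans _ _ (\sum_u (\sum_v incidence u v + (q - 1) * \sum_u' (G u == G u')%:R))).
  by apply: ler_sum => u _; apply: sum_incidence_row_le.
by rewrite big_split /= -mulr_sumr.
Qed.

Lemma incidences_le :
  \sum_u \sum_v incidence u v <= q / 2 + q * Num.sqrt (collisions G).
Proof.
exact: le_half_add_sqrt (natr_card_gt0 (0 : F)) (card_le_collisions G) sqr_incidences_le.
Qed.

End LineCount.

Section Resampling.
Context {F : finType} {M : nat}.
Implicit Types (b : {ffun 'I_M -> F}) (i : 'I_M).

Definition ffun_upd b i (u : F) : {ffun 'I_M -> F} :=
  [ffun j => if j == i then u else b j].

Lemma ffun_updE b i u j : ffun_upd b i u j = if j == i then u else b j.
Proof. by rewrite ffunE. Qed.

Lemma ffun_upd_upd b i u u' : ffun_upd (ffun_upd b i u) i u' = ffun_upd b i u'.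
Proof. by apply/ffunP => j; rewrite !ffun_updE; case: (j == i). Qed.

Lemma ffun_upd_id b i : ffun_upd b i (b i) = b.
Proof. by apply/ffunP => j; rewrite ffun_updE; case: eqP => // ->. Qed.

Lemma ffun_updC b i j u v : i != j ->
  ffun_upd (ffun_upd b i u) j v = ffun_upd (ffun_upd b j v) i u.
Proof.
move=> neq_ij; apply/ffunP => l; rewrite !ffun_updE.
by case: (eqVneq l i) => [->|//]; rewrite (negbTE neq_ij).
Qed.

Lemma sum_ffun_upd {R : nmodType} i (phi : {ffun 'I_M -> F} -> R) :
  \sum_b \sum_u phi (ffun_upd b i u) = (\sum_b phi b) *+ #|F|.
Proof.
pose swap (p : {ffun 'I_M -> F} * F) := (ffun_upd p.1 i p.2, p.1 i).
have swapK : involutive swap.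
  by case=> b u; rewrite /swap /= ffun_upd_upd ffun_upd_id ffun_updE eqxx.
transitivity (\sum_b \sum_(u : F) phi b); last first.
  by rewrite -sumrMnl; apply: eq_bigr => b _; rewrite sumr_const.
rewrite !pair_big /= [LHS](reindex_inj (inv_inj swapK)) /=.
by apply: eq_bigr => p _; rewrite ffun_upd_upd ffun_upd_id.
Qed.

End Resampling.

Section Defect.
Context {F : finFieldType} {m : nat}.
Local Notation chals := {ffun 'I_m.+1 -> F}.
Implicit Types (b : chals) (D : nat -> chals -> F) (h : chals -> F).

(* Challenges are indexed from 0: [chal b k] is B_(k+1) (and B_1 for k > m). *)
Definition chal b (k : nat) : F := b (inord k).

(* [defect D k] is T_k above, where [D k] is the difference D_(k+1). *)
Fixpoint defect D k b : F :=
  if k is k'.+1 then chal b k' * defect D k' b + D k' b else -1.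

Lemma defectS D k b : defect D k.+1 b = chal b k * defect D k b + D k b.
Proof. by []. Qed.

Lemma defectE D k b :
  defect D k b = \sum_(0 <= j < k) (\prod_(j.+1 <= i < k) chal b i) * D j b
                 - \prod_(0 <= i < k) chal b i.
Proof.
elim: k => [|k IH] /=; first by rewrite !big_geq // sub0r.
rewrite IH [\sum_(0 <= j < k.+1) _](big_nat_recr k) //=.
rewrite [\prod_(k.+1 <= i < k.+1) _]big_geq // mul1r.
rewrite [\prod_(0 <= i < k.+1) _](big_nat_recr k) //= mulrBr mulr_sumr.
rewrite (eq_big_nat _ _ (F2 := fun j => (\prod_(j.+1 <= i < k.+1) chal b i) * D j b)).
  by ring.
by move=> j /andP[_ lt_jk]; rewrite (big_nat_recr k) //=; ring.
Qed.

Definition prefix_dep (k : nat) h :=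
  forall b b', (forall i : 'I_m.+1, (i < k)%N -> b i = b' i) -> h b = h b'.

Lemma prefix_dep_upd {k h} : prefix_dep k h ->
  forall b (j : 'I_m.+1) u, (k <= j)%N -> h (ffun_upd b j u) = h b.
Proof.
move=> hk b j u le_kj; apply: hk => i lt_ik; rewrite ffun_updE; case: eqP => // eij.
by move: lt_ik; rewrite eij ltnNge le_kj.
Qed.

Lemma prefix_dep_upd_fix k h (u : F) : (k < m.+1)%N -> prefix_dep k.+1 h ->
  prefix_dep k (fun b => h (ffun_upd b (inord k) u)).
Proof.
move=> lt_km hdep b b' eq_bb'; apply: hdep => i lt_ik; rewrite !ffun_updE.
case: eqP => // /eqP neq_ik; apply: eq_bb'.
by move: neq_ik lt_ik; rewrite -val_eqE /= inordK //; lia.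
Qed.

Definition causal D := forall k, (k <= m.+1)%N -> forall b b',
  (forall i : 'I_m.+1, (i.+1 < k)%N || (i == k :> nat) -> b i = b' i) ->
  D k b = D k b'.

Context {D : nat -> chals -> F} (causalD : causal D).

Lemma defect_prefix_dep k : (k <= m.+1)%N -> prefix_dep k (defect D k).
Proof.
elim: k => [//|k IH] lt_km b b' eq_bb' /=.
rewrite /chal eq_bb' ?inordK // (IH (ltnW lt_km) b b') ?(causalD k (ltnW lt_km) b b') //.
- by move=> i /orP[|/eqP] ?; apply: eq_bb'; lia.
- by move=> i lt_ik; apply: eq_bb'; apply: ltnW.
Qed.

Lemma causal_upd_prev k b (j : 'I_m.+1) u :
  (k <= m.+1)%N -> j.+1 = k -> D k (ffun_upd b j u) = D k b.
Proof.
move=> le_km jk; apply: causalD => // i hi; rewrite ffun_updE; case: eqP => // eij.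
by move: hi; rewrite eij -jk; lia.
Qed.

End Defect.

Section DefectCount.
Context {R : realType} {F : finFieldType} {m n : nat}.
Local Notation chals := {ffun 'I_m.+1 -> F}.
Context {D : nat -> chals -> F} (causalD : causal D) (D0 : forall b, D 0 b = 0).
Context (card_F : (#|F|%:R : R) = 2 ^+ n).

Local Notation q := (#|F|%:R : R).
Local Notation Q := (#|chals|%:R : R).

Local Notation card_defect_eq k h := (\sum_b ((defect D k b == h b)%:R : R)).

Lemma card_defect1_eq_le h : prefix_dep 0 h -> card_defect_eq 1 h <= cbound R n 1 * Q.
Proof.
move=> hdep; have hb b : h b = h [ffun => 0] by apply: hdep.
have E : q * card_defect_eq 1 h = Q.
  rewrite mulr_natl -(sum_ffun_upd (inord 0)) -sum1_card natr_sum.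
  apply: eq_bigr => b _.
  under eq_bigr => u _ do rewrite /= D0 addr0 /chal ffun_updE eqxx hb mulrN1 eqr_oppLR.
  by rewrite (bigD1 (- h [ffun => 0])) //= eqxx big1 ?addr0 // => u /negbTE ->.
by rewrite /= -card_F -E mulKf ?lt0r_neq0 ?(natr_card_gt0 (0 : F)).
Qed.

Section Step.
Variable k : nat.
Hypothesis lt_km : (k < m)%N.
Hypothesis IH : forall h, prefix_dep k h ->
  card_defect_eq k.+1 h <= cbound R n k.+1 * Q.

Local Notation i1 := (inord k : 'I_m.+1).
Local Notation i2 := (inord k.+1 : 'I_m.+1).
Local Notation slice b u := (defect D k.+1 (ffun_upd b i1 u)).

Lemma card_defect_eq_resample h : prefix_dep k.+1 h ->
  q * (q * card_defect_eq k.+2 h) =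
  \sum_b \sum_u \sum_v
    ((h (ffun_upd b i1 u) == v * slice b u + D k.+1 (ffun_upd b i2 v))%:R : R).
Proof.
move=> hdep; have neq_i12 : i1 != i2 by rewrite -val_eqE /= !inordK //; lia.
rewrite !mulr_natl -(sum_ffun_upd i2) -(sum_ffun_upd i1).
apply: eq_bigr => b _; apply: eq_bigr => u _; apply: eq_bigr => v _.
rewrite defectS eq_sym (prefix_dep_upd hdep) ?inordK //.
rewrite (prefix_dep_upd (defect_prefix_dep causalD k.+1 (leqW lt_km))) ?inordK //.
rewrite /chal ffun_updE eqxx (ffun_updC b _ _ u v neq_i12) (causal_upd_prev causalD) //.
  exact: leqW.
by rewrite inordK // ltnW.
Qed.

Lemma sum_collisions_slice_le :
  \sum_b collisions (fun u => slice b u) <= q * (q * (cbound R n k.+1 * Q)).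
Proof.
set c := cbound R n k.+1.
have -> : q * (q * (c * Q)) = \sum_(u' : F) q * (c * Q) by rewrite sumr_const mulr_natl.
rewrite /collisions (eq_bigr _ (fun b _ => exchange_big _ _ _ _ _ _)) exchange_big.
apply: ler_sum => u' _; pose h' b := slice b u'.
have -> : \sum_b \sum_u ((slice b u == slice b u')%:R : R) = q * card_defect_eq k.+1 h'.
  rewrite mulr_natl -(sum_ffun_upd i1); apply: eq_bigr => b _; apply: eq_bigr => u _.
  by rewrite /h' ffun_upd_upd.
rewrite ler_pM2l ?(natr_card_gt0 (0 : F)) //; apply: IH.
by apply: prefix_dep_upd_fix; [lia | apply: (defect_prefix_dep causalD); lia].
Qed.

Lemma sum_sqrt_collisions_slice_le :
  \sum_b Num.sqrt (collisions (fun u => slice b u)) <= Q * q * Num.sqrt (cbound R n k.+1).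
Proof.
apply: le_trans (sum_sqrt_le _ _) _ => [b|].
  by rewrite sumr_ge0 // => u _; rewrite sumr_ge0.
apply: le_trans (ler_wsqrtr (ler_wpM2l (ler0n _ _) sum_collisions_slice_le)) _.
change (Num.sqrt (Q * (q * (q * (cbound R n k.+1 * Q)))) <=
        Q * q * Num.sqrt (cbound R n k.+1)).
rewrite (_ : Q * _ = (Q * q) ^+ 2 * cbound R n k.+1); last by ring.
by rewrite sqrtrM ?sqr_ge0 // sqrtr_sqr ger0_norm // mulr_ge0.
Qed.

Lemma card_defect_eq_step h : prefix_dep k.+1 h ->
  card_defect_eq k.+2 h <= cbound R n k.+2 * Q.
Proof.
move=> hdep; have q_gt0 : 0 < q := natr_card_gt0 (0 : F).
have -> : cbound R n k.+2 = (2 * q)^-1 + Num.sqrt (cbound R n k.+1) by rewrite card_F -exprS.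
rewrite -(ler_pM2l q_gt0) -(ler_pM2l q_gt0) card_defect_eq_resample //.
apply: le_trans (_ : \sum_b (q / 2 + q * Num.sqrt (collisions (fun u => slice b u))) <= _).
  by apply: ler_sum => b _; apply: incidences_le.
have sum_half : \sum_(b : chals) q / 2 = q / 2 * Q.
  by rewrite sumr_const mulr_natr; congr (_ *+ _); apply: eq_card.
rewrite big_split sum_half -mulr_sumr.
have le_sqrt := ler_wpM2l (ltW q_gt0) sum_sqrt_collisions_slice_le.
apply: le_trans (lerD (lexx _) le_sqrt) _; rewrite le_eqVlt; apply/predU1P; left.
by field; rewrite lt0r_neq0.
Qed.

End Step.

Lemma card_defect_eq_le k h : (0 < k <= m.+1)%N -> prefix_dep k.-1 h ->
  card_defect_eq k h <= cbound R n k * Q.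
Proof.
case: k => [//|k]; elim: k h => [|k IH] h /andP[_ le_km] hdep.
  exact: card_defect1_eq_le.
apply: card_defect_eq_step => // h' dep_h'.
by apply: IH => //; apply/andP; split; [|apply: ltnW].
Qed.

End DefectCount.

Lemma convex_comb_le (R : realFieldType) (A : finType) (mu g : A -> R) c :
  (forall a, 0 <= mu a) -> \sum_a mu a = 1 -> (forall a, g a <= c) ->
  \sum_a mu a * g a <= c.
Proof.
move=> mu_ge0 mu_sum le_gc; rewrite -[c]mul1r -mu_sum mulr_suml.
by apply: ler_sum => a _; rewrite ler_wpM2l.
Qed.

Section Strategy.
Context {F : finFieldType} {A : finType} {m : nat}.
Local Notation chals := {ffun 'I_m.+1 -> F}.
Variables (f : 'I_m.+2 -> A -> chals -> bool -> F) (a : A).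

Definition opening_diff k b : F := f (inord k) a b false - f (inord k) a b true.

Lemma accepts_chal b d : accepts f a b d =
  (f (inord m.+1) a b d ==
     \sum_(0 <= j < m.+1) (\prod_(j.+1 <= i < m.+1) chal b i) * f (inord j) a b d
     + (if d then \prod_(0 <= i < m.+1) chal b i else 0)).
Proof.
have chalE (i : 'I_m.+1) : b i = chal b i by rewrite /chal inord_val.
rewrite /accepts (_ : ord_max = inord m.+1); last by apply: val_inj; rewrite /= inordK.
congr (_ == _ + _); last by case: d; rewrite // big_mkord; apply: eq_bigr => i _; apply: chalE.
rewrite big_mkord; apply: eq_bigr => j _; rewrite big_geq_mkord; congr (_ * f _ _ _ _).
  by apply: eq_bigr => i _; rewrite chalE.
by apply: val_inj; rewrite /= inordK // leqW.
Qed.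

Lemma accepts_both_defect b : accepts f a b false -> accepts f a b true ->
  defect opening_diff m.+1 b = opening_diff m.+1 b.
Proof.
rewrite !accepts_chal addr0 => /eqP acc0 /eqP acc1.
rewrite defectE /opening_diff acc0 acc1 opprD addrA -sumrB.
by congr (_ - _); apply: eq_bigr => j _; rewrite mulrBr.
Qed.

Hypothesis causal_f : forall (j : 'I_m.+2) (b b' : chals) d,
  (forall i : 'I_m.+1, allowed j i -> b i = b' i) -> f j a b d = f j a b' d.
Hypothesis commit_f : forall b, f ord0 a b false = f ord0 a b true.

Lemma opening_diff_causal : causal opening_diff.
Proof.
move=> k le_km b b' eq_bb'.
by rewrite /opening_diff !(causal_f _ b b') // => i; rewrite /allowed inordK //; apply: eq_bb'.
Qed.

Lemma opening_diff0 b : opening_diff 0 b = 0.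
Proof.
rewrite /opening_diff (_ : inord 0 = ord0) ?commit_f ?subrr //.
by apply: val_inj; rewrite /= inordK.
Qed.

Context {R : realType} {n : nat} (card_F : (#|F|%:R : R) = 2 ^+ n).

Lemma accept_freq_le :
  (#|[set b | accepts f a b false]|%:R + #|[set b | accepts f a b true]|%:R : R)
    / #|chals|%:R <= 1 + cbound R n m.+1.
Proof.
set E := [set b : chals | defect opening_diff m.+1 b == opening_diff m.+1 b].
have le_card : (#|[set b | accepts f a b false]| + #|[set b | accepts f a b true]|
                 <= #|chals| + #|E|)%N.
  rewrite -cardsUI leq_add ?max_card //; apply: subset_leq_card.
  by apply/subsetP => b; rewrite !inE => /andP[acc0 acc1]; rewrite accepts_both_defect.
have le_E : (#|E|%:R : R) <= cbound R n m.+1 * #|chals|%:R.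
  have -> : (#|E|%:R : R) =
            \sum_b ((defect opening_diff m.+1 b == opening_diff m.+1 b)%:R : R).
    by rewrite -sum1_card natr_sum big_mkcond; apply: eq_bigr => b _; rewrite inE; case: eqP.
  apply: (card_defect_eq_le opening_diff_causal opening_diff0 card_F); first by rewrite leqnn.
  move=> b b' eq_bb'.
  apply: opening_diff_causal => // i /orP[/eq_bb' //|/eqP eq_im].
  by have := ltn_ord i; rewrite eq_im ltnn.
rewrite ler_pdivrMr ?(natr_card_gt0 [ffun=> 0 : F]) // mulrDl mul1r -natrD.
apply: (@le_trans _ _ (#|chals| + #|E|)%:R); first by rewrite ler_nat.
by rewrite natrD lerD2l.
Qed.

End Strategy.

Theorem mainTheorem2 (R : realType) (n m : nat) (F : finFieldType)
  (A : finType) (mu : A -> R)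
  (f : 'I_m.+1 -> A -> {ffun 'I_m -> F} -> bool -> F) :
  (0 < n)%N -> (0 < m)%N -> #|F| = (2 ^ n)%N ->
  (forall a, 0 <= mu a) -> \sum_(a : A) mu a = 1 ->
  (forall (j : 'I_m.+1) a (b b' : {ffun 'I_m -> F}) d,
      (forall i : 'I_m, allowed j i -> b i = b' i) -> f j a b d = f j a b' d) ->
  (forall a b, f ord0 a b false = f ord0 a b true) ->
  prob_accept mu f false + prob_accept mu f true <= 1 + cbound R n m.
Proof.
case: m f => [//|m] f _ _ card_F mu_ge0 mu_sum causal_f commit_f.
have card_FR : (#|F|%:R : R) = 2 ^+ n by rewrite card_F natrX.
rewrite /prob_accept -big_split /=.
under eq_bigr => a _ do rewrite -mulrDr -mulrDl.
apply: convex_comb_le => // a; apply: (accept_freq_le _ _ _ _ card_FR) => [j b b' d|b].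
  exact: causal_f.
exact: commit_f.
Qed.
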